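(* For the unit-sum normalization, there is an absolute constant $C>0$ such that for every $n\ge1$ and every truthful-in-expectation mechanism $J$ on $n$ agents and $n$ items, $ar(J)\le C/\sqrt n$.
   Context: Agents $N=\{1,\dots,n\}$, items $M=\{1,\dots,n\}$, outcomes are bijections $\mu$ ($O$ the set of outcomes). Unit-sum valuation functions: injective $u_i:M\to\mathbb R_{\ge0}$ with $\sum_j u_i(j)=1$; $V$ the set of these, $V^n$ the set of profiles. A (randomized) mechanism $J$ maps each profile to a distribution over $O$; $J(\mathbf u)_i$ is agent $i$'s random item. $J$ is truthful-in-expectation if for all $i$, $\mathbf u=(u_i,u_{-i})\in V^n$, $\tilde u_i\in V$: $\mathbb E[u_i(J(u_i,u_{-i})_i)]\ge\mathbb E[u_i(J(\tilde u_i,u_{-i})_i)]$. $ar(J)=\inf_{\mathbf u\in V^n}\mathbb E[\sum_i u_i(J(\mathbf u)_i)]/\max_{\mu\in O}\sum_i u_i(\mu_i)$. *)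

From HB Require Import structures.
From mathcomp Require Import all_boot all_fingroup.
From Stdlib Require Import Reals.

Set Implicit Arguments.
Unset Strict Implicit.
Unset Printing Implicit Defensive.

Lemma Rplus_0l : left_id R0 Rplus. Proof. exact: Rplus_0_l. Qed.
Lemma Rplus_A : associative Rplus. Proof. by move=> x y z; rewrite Rplus_assoc. Qed.
HB.instance Definition _ := Monoid.isComLaw.Build R R0 Rplus Rplus_A Rplus_comm Rplus_0l.

Notation "\rsum_ ( i : t ) F" := (\big[Rplus/R0]_(i : t) F)
  (at level 41, F at level 41, i, t at level 50).
Notation "\rsum_ ( i < n ) F" := (\big[Rplus/R0]_(i < n) F)
  (at level 41, F at level 41, i, n at level 50).

Section Defs.
Variable n : nat.

(* agents N = items M = 'I_n; an outcome is a bijection mu : agents -> items *)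
Definition outcome := {perm 'I_n}.
Definition valuation := 'I_n -> R.
Definition profile := 'I_n -> valuation.

Definition unit_sum (u : valuation) : Prop :=
  injective u /\ (forall j, 0 <= u j)%R /\ \rsum_(j < n) u j = 1%R.

Definition valid_profile (p : profile) : Prop := forall i, unit_sum (p i).

Definition mechanism := profile -> outcome -> R.

Definition is_mechanism (J : mechanism) : Prop :=
  forall p, valid_profile p ->
    (forall mu, 0 <= J p mu)%R /\ \rsum_(mu : outcome) J p mu = 1%R.

Definition exp_util (J : mechanism) (p : profile) (i : 'I_n) (v : valuation) : R :=
  \rsum_(mu : outcome) (J p mu * v (mu i))%R.

Definition replace (p : profile) (i : 'I_n) (v : valuation) : profile :=
  fun k => if k == i then v else p k.

Definition truthful (J : mechanism) : Prop :=
  forall (p : profile) (i : 'I_n) (v : valuation),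
    valid_profile p -> unit_sum v ->
    (exp_util J (replace p i v) i (p i) <= exp_util J p i (p i))%R.

Definition sw (p : profile) (mu : outcome) : R := \rsum_(i < n) p i (mu i).

Definition exp_sw (J : mechanism) (p : profile) : R :=
  \rsum_(mu : outcome) (J p mu * sw p mu)%R.

Definition opt_sw (p : profile) : R := \big[Rmax/R0]_(mu : outcome) sw p mu.

(* ratio at a profile; ar(J) is the infimum of this over valid profiles *)
Definition ratio (J : mechanism) (p : profile) : R := (exp_sw J p / opt_sw p)%R.

End Defs.

From HB Require Import structures.
From mathcomp Require Import all_boot all_fingroup.
From Stdlib Require Import Reals.
From Stdlib Require Import Lra Psatz FunctionalExtensionality Classical.
From mathcomp Require Import zify.

(* Take k groups of k agents and k items ("prizes"), one per group.  In group g
   every member values prize g at about 1/(k+1), except a chosen member T g who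
   values it at about 1/2; the rest of every valuation is spread almost uniformly
   and contributes O(1) welfare in total.  Had the chosen member reported the low
   valuation, group g would look symmetric, so for a uniformly random T it would
   win prize g with probability at most 1/k.  Truthfulness caps the gain from
   reporting truthfully at O(k/n) per group, so for some T the chosen members win
   O(1) prizes in expectation and the expected welfare is O(1), while giving each
   prize to its chosen member yields welfare k/2.  Take k of order sqrt n. *)

Set Implicit Arguments.
Unset Strict Implicit.

Section RealSums.
Local Open Scope R_scope.
Variable I : finType.
Implicit Types (F G : I -> R) (c : R).

Lemma ler_rsum F G : (forall i, F i <= G i) -> \rsum_(i : I) F i <= \rsum_(i : I) G i.
Proof. by move=> FG; apply: (big_ind2 Rle) => //; [lra | move=> *; lra]. Qed.

Lemma rsum_ge0 F : (forall i, 0 <= F i) -> 0 <= \rsum_(i : I) F i.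
Proof. by move=> F0; apply: (big_ind (Rle 0)) => //; [lra | move=> *; lra]. Qed.

Lemma rsum_distrr c F : c * (\rsum_(i : I) F i) = \rsum_(i : I) c * F i.
Proof.
apply: (big_ind2 (fun a b => c * a = b)) => //; first ring.
by move=> ? ? ? ? <- <-; ring.
Qed.

Lemma rsum_distrl c F : (\rsum_(i : I) F i) * c = \rsum_(i : I) F i * c.
Proof. by rewrite Rmult_comm rsum_distrr; apply: eq_bigr => i _; ring. Qed.

Lemma rsum_const c : \rsum_(i : I) c = INR #|I| * c.
Proof.
rewrite big_const; elim: #|I| => [|m IH] /=; first ring.
by rewrite IH -/(INR m.+1) S_INR; ring.
Qed.

Lemma rsum_if_eq j F : \rsum_(i : I) (if i == j then F i else 0) = F j.
Proof. by rewrite -big_mkcond big_pred1_eq. Qed.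

Lemma ler_rsum_term j F : (forall i, 0 <= F i) -> F j <= \rsum_(i : I) F i.
Proof.
move=> F0; rewrite (bigD1 j) //=.
have : 0 <= \big[Rplus/R0]_(i | i != j) F i.
  by apply: (big_ind (Rle 0)) => //; [lra | move=> *; lra].
lra.
Qed.

Lemma ler_rsum_inj (J : finType) (h : I -> J) (F : J -> R) :
  injective h -> (forall j, 0 <= F j) -> \rsum_(i : I) F (h i) <= \rsum_(j : J) F j.
Proof.
move=> h_inj F0; rewrite (bigID (mem (h @: [set: I]))) /=.
rewrite big_imset /=; last by move=> x y _ _; exact: h_inj.
have : 0 <= \big[Rplus/R0]_(j | j \notin h @: [set: I]) F j.
  by apply: (big_ind (Rle 0)) => //; [lra | move=> *; lra].
suff -> : \big[Rplus/R0]_(i in [set: I]) F (h i) = \rsum_(i : I) F (h i) by lra.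
by apply: eq_bigl => i; rewrite in_setT.
Qed.

Lemma exists_le_of_rsum_le (i0 : I) F c :
  \rsum_(i : I) F i <= INR #|I| * c -> exists i, F i <= c.
Proof.
move=> Fc; apply: NNPP => no_i.
have gt_Fc i : c < F i by apply: Rnot_le_lt => Fic; apply: no_i; exists i.
have : F i0 - c <= \rsum_(i : I) (F i - c).
  by apply: (ler_rsum_term i0 (F := fun i => F i - c)) => i; have := gt_Fc i; lra.
have -> : \rsum_(i : I) (F i - c) = \rsum_(i : I) F i + INR #|I| * - c.
  by rewrite -rsum_const -big_split.
have := gt_Fc i0; lra.
Qed.

End RealSums.

Section CoordinateAveraging.
Local Open Scope R_scope.
Variables (I J : finType) (g : I).

Definition agree_off (T T' : {ffun I -> J}) := forall h, h != g -> T h = T' h.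

Lemma rsum_fiber_shift (H : {ffun I -> J} -> R) (c c' : J) :
  (forall T T', agree_off T T' -> H T = H T') ->
  \rsum_(T : {ffun I -> J}) (if T g == c then H T else 0) =
  \rsum_(T : {ffun I -> J}) (if T g == c' then H T else 0).
Proof.
move=> H_off.
pose s (T : {ffun I -> J}) := [ffun h => if h == g then tperm c c' (T h) else T h].
have sK : involutive s.
  by move=> T; apply/ffunP => h; rewrite !ffunE; case: eqP => // _; rewrite tpermK.
rewrite (reindex_inj (inv_inj sK)) /=; apply: eq_bigr => T _.
have -> : H (s T) = H T by apply: H_off => h /negbTE ng; rewrite ffunE ng.
by rewrite ffunE eqxx -(inj_eq (@perm_inj _ (tperm c c')) (T g) c') tpermR.
Qed.

(* [T g] is uniform given the other coordinates of T, which are all that [Y T] depends on. *)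
Lemma card_mul_rsum_at_coord (Y : {ffun I -> J} -> J -> R) :
  (forall T T' c, agree_off T T' -> Y T c = Y T' c) ->
  INR #|J| * (\rsum_(T : {ffun I -> J}) Y T (T g)) =
  \rsum_(T : {ffun I -> J}) \rsum_(c : J) Y T c.
Proof.
move=> Y_off.
pose fiber c c' := \rsum_(T : {ffun I -> J}) (if T g == c' then Y T c else 0).
have fiber_shift c c' : fiber c c' = fiber c c.
  by apply: rsum_fiber_shift => T T'; exact: Y_off.
have -> : \rsum_(T : {ffun I -> J}) Y T (T g) = \rsum_(c : J) fiber c c.
  rewrite exchange_big /=; apply: eq_bigr => T _.
  by rewrite -(rsum_if_eq (T g) (Y T)); apply: eq_bigr => c _; rewrite eq_sym.
rewrite rsum_distrr [RHS]exchange_big /=; apply: eq_bigr => c _.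
rewrite -[INR #|J| * _]rsum_const.
transitivity (\rsum_(c' : J) fiber c c'); first by apply: eq_bigr => c' _.
rewrite /fiber exchange_big /=; apply: eq_bigr => T _.
by rewrite -[RHS](rsum_if_eq (T g) (fun _ => Y T c)); apply: eq_bigr => c' _; rewrite eq_sym.
Qed.

End CoordinateAveraging.

Section SpikedValuations.
Local Open Scope R_scope.
Variable n : nat.
Implicit Types (a j : 'I_n) (al : R).

(* Mixed into every valuation to make it injective, at a cost of at most 2/(n+1) per item. *)
Definition ramp j : R := 2 * (INR j + 1) / (INR n * (INR n + 1)).

Definition spiked a al : valuation n := fun j => (if j == a then al else 0) + (1 - al) * ramp j.

Lemma INR_ordS_le j : INR j + 1 <= INR n.
Proof. by rewrite -S_INR; apply: le_INR; apply/leP; exact: ltn_ord. Qed.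

Lemma Rinv_INR_S_bounds (m : nat) : 0 < / INR m.+1 <= 1.
Proof.
have m1 : 1 <= INR m.+1 by apply: (le_INR 1); apply/leP.
split; first by apply: Rinv_0_lt_compat; lra.
by rewrite -Rinv_1; apply: Rinv_le_contravar; lra.
Qed.

Lemma ramp_gt0 j : 0 < ramp j.
Proof.
have := INR_ordS_le j; have := pos_INR j => j0 jn.
by apply: Rdiv_lt_0_compat; nra.
Qed.

Lemma ramp_le j : ramp j <= 2 / (INR n + 1).
Proof.
have := INR_ordS_le j; have := pos_INR j => j0 jn.
have -> : 2 / (INR n + 1) = 2 * INR n / (INR n * (INR n + 1)) by field; lra.
by apply: Rmult_le_compat_r; [apply: Rlt_le; apply: Rinv_0_lt_compat; nra | lra].
Qed.

Lemma ramp_inj : injective ramp.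
Proof.
move=> j j' E; apply: val_inj; apply: INR_eq => /=.
have := INR_ordS_le j; have := pos_INR j => j0 jn.
have D0 : INR n * (INR n + 1) <> 0 by nra.
have := Rmult_eq_compat_r (INR n * (INR n + 1)) _ _ E.
by rewrite /ramp /Rdiv !Rmult_assoc Rinv_l //; lra.
Qed.

Lemma rsum_ramp : (0 < n)%nat -> \rsum_(j < n) ramp j = 1.
Proof.
move=> n_gt0; have : 1 <= INR n by apply: (le_INR 1); apply/leP.
rewrite /ramp -rsum_distrl -rsum_distrr.
suff -> : \rsum_(j < n) (INR j + 1) = INR n * (INR n + 1) / 2 by move=> ?; field; lra.
elim: (n) => [|m IH]; first by rewrite big_ord0 /=; field.
by rewrite big_ord_recr /= IH -/(INR m.+1) S_INR; field.
Qed.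

Lemma spiked_unit_sum a al :
  0 <= al < 1 -> al = 0 \/ 2 * (1 - al) < al * (INR n + 1) -> unit_sum (spiked a al).
Proof.
move=> al01 al_big; have n_gt0 : (0 < n)%nat by case: n a => [[]|].
have ramp_gap j : j != a -> al + (1 - al) * ramp a <> (1 - al) * ramp j.
  move=> ja E; case: al_big => [al0|big].
    by move/eqP: ja; apply; apply: ramp_inj; rewrite al0 in E; lra.
  have := ramp_le j; have := ramp_gt0 a; have := pos_INR n => n0 ra rj.
  have : (1 - al) * ramp j <= (1 - al) * (2 / (INR n + 1)) by apply: Rmult_le_compat_l; lra.
  have : (1 - al) * (2 / (INR n + 1)) < al.
    have e : (1 - al) * (2 / (INR n + 1)) * (INR n + 1) = 2 * (1 - al) by field; lra.
    by apply: (Rmult_lt_reg_r (INR n + 1)); lra.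
  nra.
split; [|split].
- move=> j j'; rewrite /spiked.
  case: (eqVneq j a) => [->|ja]; case: (eqVneq j' a) => [->|j'a] // E.
  + by exfalso; apply: (ramp_gap j' j'a); lra.
  + by exfalso; apply: (ramp_gap j ja); lra.
  + by apply: ramp_inj; apply: (Rmult_eq_reg_l (1 - al)); lra.
- by move=> j; rewrite /spiked; have := ramp_gt0 j; case: (j == a); nra.
- rewrite /spiked big_split /= (rsum_if_eq a (fun _ => al)) -rsum_distrr rsum_ramp //.
  ring.
Qed.

Lemma spiked_le a al j :
  0 <= al <= 1 -> spiked a al j <= (if j == a then al else 0) + 2 / (INR n + 1).
Proof.
move=> al01; rewrite /spiked; have := ramp_le j; have := ramp_gt0 j => r0 r1.
suff : (1 - al) * ramp j <= ramp j by lra.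
nra.
Qed.

Lemma spiked_ge a al j : 0 <= al <= 1 -> (if j == a then al else 0) <= spiked a al j.
Proof.
move=> al01; rewrite /spiked; have := ramp_gt0 j => r0.
suff : 0 <= (1 - al) * ramp j by lra.
nra.
Qed.

End SpikedValuations.

Section Mechanisms.
Local Open Scope R_scope.
Variables (n : nat) (J : mechanism n).
Hypothesis J_mech : is_mechanism J.
Implicit Types (p : profile n) (i a : 'I_n) (mu : outcome n).

Definition alloc_prob p i a : R := \rsum_(mu : outcome n) (if mu i == a then J p mu else 0).

Lemma alloc_prob_ge0 p i a : valid_profile p -> 0 <= alloc_prob p i a.
Proof.
move=> p_ok; have [J0 _] := J_mech p_ok.
by apply: rsum_ge0 => mu; case: (_ == _); [exact: J0 | lra].
Qed.

Lemma rsum_alloc_prob_agents p a : valid_profile p -> \rsum_(i < n) alloc_prob p i a = 1.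
Proof.
move=> p_ok; have [_ J1] := J_mech p_ok.
rewrite /alloc_prob exchange_big /= -[RHS]J1; apply: eq_bigr => mu _.
rewrite -[RHS](rsum_if_eq ((mu^-1)%g a) (fun _ => J p mu)); apply: eq_bigr => i _.
by rewrite -[i == _](inj_eq (@perm_inj _ mu)) permKV.
Qed.

Lemma exp_util_spiked_le p i a al : valid_profile p -> 0 <= al <= 1 ->
  exp_util J p i (spiked a al) <= al * alloc_prob p i a + 2 / (INR n + 1).
Proof.
move=> p_ok al01; have [J0 J1] := J_mech p_ok.
rewrite /exp_util /alloc_prob rsum_distrr -[2 / _]Rmult_1_l -[X in X * (2 / _)]J1.
rewrite rsum_distrl -big_split.
apply: ler_rsum => mu; have := J0 mu; have := spiked_le a (mu i) al01.
by case: (mu i == a) => /=; nra.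
Qed.

Lemma exp_util_spiked_ge p i a al : valid_profile p -> 0 <= al <= 1 ->
  al * alloc_prob p i a <= exp_util J p i (spiked a al).
Proof.
move=> p_ok al01; have [J0 _] := J_mech p_ok.
rewrite /exp_util /alloc_prob rsum_distrr.
apply: ler_rsum => mu; have := J0 mu; have := spiked_ge a (mu i) al01.
by case: (mu i == a) => /=; nra.
Qed.

Lemma exp_sw_rsum_exp_util p : exp_sw J p = \rsum_(i < n) exp_util J p i (p i).
Proof.
rewrite /exp_sw /exp_util exchange_big /=; apply: eq_bigr => mu _.
by rewrite /sw rsum_distrr.
Qed.

Lemma sw_le_opt_sw p mu : sw p mu <= opt_sw p.
Proof.
rewrite /opt_sw unlock /reducebig.
elim: (index_enum _) (mem_index_enum mu) => //= mu' s IH.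
rewrite in_cons => /orP [/eqP <-|/IH le_mu]; first exact: Rmax_l.
exact: Rle_trans le_mu (Rmax_r _ _).
Qed.

Lemma sw_ge0 p mu : valid_profile p -> 0 <= sw p mu.
Proof. by move=> p_ok; apply: rsum_ge0 => i; have [_ [u0 _]] := p_ok i; exact: u0. Qed.

Lemma ratio_le1 p : valid_profile p -> ratio J p <= 1.
Proof.
move=> p_ok; have [J0 J1] := J_mech p_ok.
have opt_ge0 : 0 <= opt_sw p by apply: Rle_trans (sw_ge0 1%g p_ok) (sw_le_opt_sw _ _).
have exp_le_opt : exp_sw J p <= opt_sw p.
  rewrite -[X in _ <= X]Rmult_1_l -J1 rsum_distrl; apply: ler_rsum => mu.
  by apply: Rmult_le_compat_l; [exact: J0 | exact: sw_le_opt_sw].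
rewrite /ratio; case: (Req_dec (opt_sw p) 0) => [->|opt_ne0].
  by rewrite /Rdiv Rinv_0 Rmult_0_r; lra.
rewrite /Rdiv -(Rinv_r (opt_sw p)) //; apply: Rmult_le_compat_r => //.
by apply: Rlt_le; apply: Rinv_0_lt_compat; lra.
Qed.

End Mechanisms.

Section GroupLayout.
Variables (n' k' : nat).
Local Notation n := n'.+1.
Local Notation k := k'.+1.
Hypothesis room : (k + k * k <= n)%nat.

(* Agents k, ..., k + k*k - 1 form k groups of k members; item g < k is the prize of group g. *)
Definition member (g c : 'I_k) : 'I_n := inord (k + g * k + c).
Definition prize (g : 'I_k) : 'I_n := inord g.

Definition slot (i : 'I_n) : option ('I_k * 'I_k) :=
  if (k <= i) && (i < k + k * k) then Some (inord ((i - k) %/ k), inord ((i - k) %% k))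
  else None.

Lemma member_val g c : member g c = k + g * k + c :> nat.
Proof. by rewrite inordK //; have := ltn_ord g; have := ltn_ord c; nia. Qed.

Lemma prize_val g : prize g = g :> nat.
Proof. by rewrite inordK //; have := ltn_ord g; nia. Qed.

Lemma slot_member g c : slot (member g c) = Some (g, c).
Proof.
have := ltn_ord g; have := ltn_ord c => lt_ck lt_gk.
rewrite /slot member_val ifT; last by apply/andP; split; nia.
have -> : (k + g * k + c - k = g * k + c)%nat by lia.
by rewrite divnMDl // divn_small // addn0 modnMDl modn_small // !inord_val.
Qed.

Lemma member_slot i g c : slot i = Some (g, c) -> member g c = i.
Proof.
rewrite /slot; case: ifP => // /andP [k_le_i i_lt] [<- <-]; apply: val_inj => /=.
rewrite member_val !inordK ?ltn_mod //; last by rewrite ltn_divLR //; lia.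
by have := divn_eq (i - k) k; lia.
Qed.

Lemma member_inj g c g' c' : member g c = member g' c' -> g = g' /\ c = c'.
Proof. by move/(congr1 slot); rewrite !slot_member => -[-> ->]. Qed.

Lemma slot_prize g : slot (prize g) = None.
Proof. by rewrite /slot prize_val leqNgt ltn_ord. Qed.

Section ChosenMembers.
Variable T : {ffun 'I_k -> 'I_k}.

Definition swap_chosen (i : 'I_n) : 'I_n :=
  if slot i is Some (g, c) then (if c == T g then prize g else i)
  else if i < k then member (inord i) (T (inord i)) else i.

Lemma swap_chosenK : involutive swap_chosen.
Proof.
move=> i; rewrite {2}/swap_chosen; case slot_i: (slot i) => [[g c]|].
  case: eqVneq => [c_chosen|c_other]; last by rewrite /swap_chosen slot_i (negbTE c_other).
  rewrite /swap_chosen slot_prize prize_val ltn_ord inord_val.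
  by rewrite -c_chosen; exact: member_slot.
case: ifP => [i_lt_k|]; last by rewrite /swap_chosen slot_i => ->.
rewrite /swap_chosen slot_member eqxx; apply: val_inj.
by rewrite /= prize_val inordK.
Qed.

Lemma swap_chosen_member g : swap_chosen (member g (T g)) = prize g.
Proof. by rewrite /swap_chosen slot_member eqxx. Qed.

End ChosenMembers.

End GroupLayout.

Arguments member {n' k'} g c.
Arguments prize {n' k'} g.
Arguments slot {n' k'} i.

Section HardProfiles.
Local Open Scope R_scope.
Variables (n' k' : nat).
Local Notation n := n'.+1.
Local Notation k := k'.+1.
Hypothesis room : (k + k * k <= n)%nat.
Variable J : mechanism n.
Hypothesis J_mech : is_mechanism J.
Local Notation choices := {ffun 'I_k -> 'I_k}.
Implicit Types (T : choices) (g : 'I_k) (i : 'I_n).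

Definition strong g : valuation n := spiked (prize g) (/ 2).
Definition weak g : valuation n := spiked (prize g) (/ INR k.+1).
Definition filler : valuation n := spiked ord0 0.

Definition hard_profile T : profile n := fun i =>
  if slot i is Some (g, c) then (if c == T g then strong g else weak g) else filler.

Definition masked_profile T g0 : profile n := fun i =>
  if slot i is Some (g, c) then (if (g != g0) && (c == T g) then strong g else weak g)
  else filler.

Lemma INR_room : INR k + INR k * INR k <= INR n.
Proof. by rewrite -mult_INR -plus_INR; apply: le_INR; apply/leP. Qed.

Lemma strong_unit_sum g : unit_sum (strong g).
Proof.
have := INR_room; have : 1 <= INR k by apply: (le_INR 1); apply/leP.
by move=> k1 kn; apply: spiked_unit_sum; [lra | right; nra].
Qed.

Lemma weak_unit_sum g : unit_sum (weak g).
Proof.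
have := INR_room; have : 1 <= INR k by apply: (le_INR 1); apply/leP.
rewrite /weak (S_INR k) => k1 kn; set w := / (INR k + 1).
have w_gt0 : 0 < w by apply: Rinv_0_lt_compat; lra.
have w_k : w * (INR k + 1) = 1 by apply: Rinv_l; lra.
apply: spiked_unit_sum; [nra | right; nra].
Qed.

Lemma filler_unit_sum : unit_sum filler.
Proof. by apply: spiked_unit_sum; [lra | left]. Qed.

Lemma hard_profile_valid T : valid_profile (hard_profile T).
Proof.
move=> i; rewrite /hard_profile; case: (slot i) => [[g c]|]; last exact: filler_unit_sum.
by case: (_ == _); [exact: strong_unit_sum | exact: weak_unit_sum].
Qed.

Lemma masked_profile_valid T g0 : valid_profile (masked_profile T g0).
Proof.
move=> i; rewrite /masked_profile; case: (slot i) => [[g c]|]; last exact: filler_unit_sum.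
by case: (_ && _); [exact: strong_unit_sum | exact: weak_unit_sum].
Qed.

Lemma replace_hard_profile T g :
  replace (hard_profile T) (member g (T g)) (weak g) = masked_profile T g.
Proof.
apply: functional_extensionality => i; rewrite /replace /hard_profile /masked_profile.
case: eqVneq => [->|not_chosen]; first by rewrite slot_member //= eqxx.
case slot_i: (slot i) => [[g' c]|] //; case: (eqVneq g' g) => [eq_g'|//] /=.
case: (eqVneq c (T g')) => // c_chosen; move: not_chosen.
by rewrite -(member_slot room slot_i) c_chosen eq_g' eqxx.
Qed.

Lemma replace_masked_profile T g :
  replace (masked_profile T g) (member g (T g)) (strong g) = hard_profile T.
Proof.
apply: functional_extensionality => i; rewrite -replace_hard_profile /replace.
by case: eqVneq => [->|//]; rewrite /hard_profile slot_member //= eqxx.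
Qed.

Lemma masked_profile_chosen T g : masked_profile T g (member g (T g)) = weak g.
Proof. by rewrite -replace_hard_profile /replace eqxx. Qed.

Lemma masked_profile_agree_off T T' g :
  agree_off g T T' -> masked_profile T g = masked_profile T' g.
Proof.
move=> TT'; apply: functional_extensionality => i; rewrite /masked_profile.
case: (slot i) => [[g' c]|] //; case: eqVneq => [//|g'_ne] /=.
by rewrite TT'.
Qed.

(* The tie-breaking error 2/(n+1), measured in units of the weak value 1/(k+1). *)
Definition slack : R := 2 / (INR n + 1) * INR k.+1.

(* Truthfulness at [masked_profile T g]: its chosen member gains nothing by reporting [strong g]. *)
Lemma alloc_prob_hard_le_masked T g :
  truthful J ->
  alloc_prob J (hard_profile T) (member g (T g)) (prize g) <=
  alloc_prob J (masked_profile T g) (member g (T g)) (prize g) + slack.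
Proof.
move=> J_truthful.
have := J_truthful _ (member g (T g)) _ (masked_profile_valid T g) (strong_unit_sum g).
rewrite replace_masked_profile masked_profile_chosen.
have k_gt0 : 0 < INR k.+1 by apply: lt_0_INR; apply/ltP.
have [w_gt0 w_le1] := Rinv_INR_S_bounds k.
have w01 : 0 <= / INR k.+1 <= 1 by lra.
have := exp_util_spiked_ge J_mech (member g (T g)) (prize g) (hard_profile_valid T) w01.
have := exp_util_spiked_le J_mech (member g (T g)) (prize g) (masked_profile_valid T g) w01.
rewrite /slack -/(weak g); set x := alloc_prob _ _ _ _; set y := alloc_prob _ _ _ _.
move=> y_le x_ge truth; apply: (Rmult_le_reg_l (/ INR k.+1)) => //.
by rewrite Rmult_plus_distr_l (Rmult_comm (_ / _)) -Rmult_assoc Rinv_l ?Rmult_1_l; lra.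
Qed.

Definition chosen_wins T : R :=
  \rsum_(g < k) alloc_prob J (hard_profile T) (member g (T g)) (prize g).

Lemma rsum_alloc_prob_masked_le1 T g :
  \rsum_(c < k) alloc_prob J (masked_profile T g) (member g c) (prize g) <= 1.
Proof.
rewrite -(rsum_alloc_prob_agents J_mech (prize g) (masked_profile_valid T g)).
apply: (ler_rsum_inj (h := member g) (F := fun i => alloc_prob J _ i _)).
  by move=> c c' /(member_inj room) [].
by move=> i; exact: alloc_prob_ge0 J_mech _ _ _ (masked_profile_valid T g).
Qed.

(* The masked profile of group g does not depend on T g, so averaged over T its chosen
   member wins prize g with probability at most 1/k. *)
Lemma exists_few_chosen_wins : truthful J -> exists T, chosen_wins T <= 1 + INR k * slack.
Proof.
move=> J_truthful.
pose Y g (T : choices) c := alloc_prob J (masked_profile T g) (member g c) (prize g).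
have k_gt0 : 0 < INR k by apply: lt_0_INR; apply/ltP.
have avg g : INR k * (\rsum_(T : choices) Y g T (T g)) <= INR #|choices|.
  rewrite -[in INR k](card_ord k) card_mul_rsum_at_coord; last first.
    by move=> T T' c TT'; rewrite /Y (masked_profile_agree_off TT').
  rewrite -[X in _ <= X]Rmult_1_r -rsum_const; apply: ler_rsum => T.
  exact: rsum_alloc_prob_masked_le1.
have sumY : \rsum_(g < k) \rsum_(T : choices) Y g T (T g) <= INR #|choices|.
  apply: (Rmult_le_reg_l (INR k)) => //; rewrite rsum_distrr.
  apply: Rle_trans (ler_rsum avg) _.
  by rewrite rsum_const card_ord; lra.
apply: (exists_le_of_rsum_le [ffun=> ord0]).
apply: Rle_trans (_ : _ <= \rsum_(T : choices) \rsum_(g < k) (Y g T (T g) + slack)) _.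
  by apply: ler_rsum => T; apply: ler_rsum => g; exact: alloc_prob_hard_le_masked.
suff -> : \rsum_(T : choices) \rsum_(g < k) (Y g T (T g) + slack) =
    \rsum_(g < k) \rsum_(T : choices) Y g T (T g) + INR #|choices| * (INR k * slack).
  by set N := INR #|choices| in sumY *; lra.
rewrite exchange_big; under eq_bigr do rewrite big_split.
by rewrite big_split !rsum_const card_ord /=; ring.
Qed.

Lemma exp_util_hard_le T i :
  exp_util J (hard_profile T) i (hard_profile T i) <=
  2 / (INR n + 1) + / INR k.+1 * (\rsum_(a < k) alloc_prob J (hard_profile T) i (prize a)) +
  / 2 * (\rsum_(g < k)
           (if i == member g (T g) then alloc_prob J (hard_profile T) i (prize g) else 0)).
Proof.
set p := hard_profile T; set x := alloc_prob J p i.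
pose won g := if i == member g (T g) then x (prize g) else 0.
set S := \rsum_(g < k) (if _ then _ else _).
have p_ok : valid_profile p := hard_profile_valid T.
have x0 a : 0 <= x a by exact: alloc_prob_ge0.
have won0 g : 0 <= won g by rewrite /won; case: ifP => _; [exact: x0 | lra].
have [w_gt0 w_le1] := Rinv_INR_S_bounds k.
have weak_ge0 : 0 <= / INR k.+1 * (\rsum_(a < k) x (prize a)).
  by apply: Rmult_le_pos; [lra | exact: rsum_ge0].
have strong_ge0 : 0 <= S by exact: rsum_ge0.
rewrite {2}/p /hard_profile; case slot_i: (slot i) => [[g c]|]; last first.
  by rewrite /filler; have := exp_util_spiked_le J_mech i ord0 p_ok (conj (Rle_refl 0) Rle_0_1); lra.
case: eqVneq => [c_chosen|_].
  have : x (prize g) <= S.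
    have := ler_rsum_term g won0.
    by rewrite /won -c_chosen (member_slot room slot_i) eqxx.
  have := exp_util_spiked_le J_mech i (prize g) p_ok (ltac:(lra) : 0 <= / 2 <= 1).
  by rewrite /strong -/x; lra.
have := exp_util_spiked_le J_mech i (prize g) p_ok (conj (Rlt_le _ _ w_gt0) w_le1).
have : / INR k.+1 * x (prize g) <= / INR k.+1 * (\rsum_(a < k) x (prize a)).
  by apply: Rmult_le_compat_l; [lra | exact: (ler_rsum_term g (F := fun a => x (prize a)))].
by rewrite /weak -/x; lra.
Qed.

Lemma exp_sw_hard_le T : exp_sw J (hard_profile T) <= 3 + / 2 * chosen_wins T.
Proof.
set p := hard_profile T.
have sum_weak : \rsum_(i < n) \rsum_(a < k) alloc_prob J p i (prize a) = INR k.
  rewrite exchange_big; transitivity (\rsum_(a < k) 1); last by rewrite rsum_const card_ord Rmult_1_r.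
  by apply: eq_bigr => a _; exact: (rsum_alloc_prob_agents J_mech (prize a) (hard_profile_valid T)).
have sum_strong : \rsum_(i < n) \rsum_(g < k)
    (if i == member g (T g) then alloc_prob J p i (prize g) else 0) = chosen_wins T.
  by rewrite exchange_big; apply: eq_bigr => g _; rewrite rsum_if_eq.
have n_part : INR n * (2 / (INR n + 1)) <= 2.
  have := pos_INR n => n0.
  have -> : INR n * (2 / (INR n + 1)) = 2 - 2 / (INR n + 1) by field; lra.
  have : 0 < 2 / (INR n + 1) by apply: Rdiv_lt_0_compat; lra.
  lra.
have k_part : / INR k.+1 * INR k <= 1.
  have := pos_INR k => k0; rewrite (S_INR k).
  have -> : / (INR k + 1) * INR k = 1 - / (INR k + 1) by field; lra.
  have : 0 < / (INR k + 1) by apply: Rinv_0_lt_compat; lra.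
  lra.
rewrite exp_sw_rsum_exp_util; apply: Rle_trans (ler_rsum (exp_util_hard_le T)) _.
rewrite !big_split rsum_const card_ord.
set N := INR n in n_part *; set K := INR k in sum_weak k_part *.
set W := / INR k.+1 in k_part *.
by rewrite /= -!rsum_distrr sum_weak sum_strong; lra.
Qed.

Lemma opt_sw_hard_ge T : INR k / 2 <= opt_sw (hard_profile T).
Proof.
pose mu := perm (inv_inj (swap_chosenK room T)).
apply: Rle_trans (sw_le_opt_sw _ mu).
have -> : INR k / 2 = \rsum_(g < k) / 2 by rewrite rsum_const card_ord.
apply: Rle_trans (_ : _ <= \rsum_(g < k) hard_profile T (member g (T g)) (mu (member g (T g)))) _.
  apply: ler_rsum => g; rewrite permE swap_chosen_member // /hard_profile slot_member //=.
  rewrite (eqxx (T g)) /strong.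
  by have := spiked_ge (prize g : 'I_n) (prize g) (ltac:(lra) : 0 <= / 2 <= 1); rewrite eqxx.
rewrite /sw; apply: (ler_rsum_inj (h := fun g => member g (T g)) (F := fun i => hard_profile T i (mu i))).
  by move=> g g' /(member_inj room) [].
by move=> i; have [_ [u0 _]] := hard_profile_valid T i; exact: u0.
Qed.

Lemma ratio_hard_le : truthful J -> exists p, valid_profile p /\ ratio J p <= 9 / INR k.
Proof.
move=> J_truthful; have [T few_wins] := exists_few_chosen_wins J_truthful.
exists (hard_profile T); split; first exact: hard_profile_valid.
have k_gt0 : 0 < INR k by apply: lt_0_INR; apply/ltP.
have slack_le : INR k * slack <= 2.
  have := INR_room; have := pos_INR n => n0 kn; rewrite /slack (S_INR k).
  apply: (Rmult_le_reg_r (INR n + 1)); first lra.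
  have -> : INR k * (2 / (INR n + 1) * (INR k + 1)) * (INR n + 1) = 2 * (INR k + INR k * INR k).
    by field; lra.
  lra.
have := exp_sw_hard_le T; have := opt_sw_hard_ge T => opt_ge exp_le.
rewrite /ratio; apply: Rle_trans (_ : _ <= 9 / 2 / opt_sw (hard_profile T)) _.
  by apply: Rmult_le_compat_r; [apply: Rlt_le; apply: Rinv_0_lt_compat | ]; lra.
apply: Rle_trans (_ : _ <= 9 / 2 / (INR k / 2)) _; last by right; field; lra.
by apply: Rmult_le_compat_l; [| apply: Rinv_le_contravar]; lra.
Qed.

End HardProfiles.

Section RatioBound.
Local Open Scope R_scope.

Lemma exists_profile_ratio_le_sqrt n (J : mechanism n) :
  (0 < n)%nat -> is_mechanism J -> truthful J ->
  exists p, valid_profile p /\ ratio J p <= 27 / sqrt (INR n).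
Proof.
case: n J => // n' J _ J_mech J_truthful.
have [sq_le sq_gt] := Nat.sqrt_spec n'.+1 (Nat.le_0_l _).
set m := Nat.sqrt n'.+1 in sq_le sq_gt.
have sqrt_gt0 : 0 < sqrt (INR n'.+1) by apply: sqrt_lt_R0; apply: lt_0_INR; apply/ltP.
have sqrt_lt : sqrt (INR n'.+1) < INR m.+1.
  rewrite -(sqrt_square (INR m.+1)); last exact: pos_INR.
  by apply: sqrt_lt_1_alt; split; [exact: pos_INR | rewrite -mult_INR; apply: lt_INR].
case: (leqP m 1) => [m_le1 | m_gt1].
  have ramp_ok : valid_profile (fun _ => spiked (ord0 : 'I_n'.+1) 0).
    by move=> i; apply: spiked_unit_sum; [lra | left].
  exists (fun _ => spiked ord0 0); split => //; apply: Rle_trans (ratio_le1 J_mech ramp_ok) _.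
  have : INR m.+1 <= 2 by apply: (le_INR _ 2); apply/leP.
  move=> m1_le2; apply: (Rmult_le_reg_r (sqrt (INR n'.+1))) => //.
  by rewrite /Rdiv Rmult_assoc Rinv_l; lra.
have room : ((m - 2).+1 + (m - 2).+1 * (m - 2).+1 <= n'.+1)%nat.
  by move/leP: sq_le => sq_le; nia.
have [p [p_ok ratio_le]] := ratio_hard_le room J_mech J_truthful.
exists p; split => //; apply: Rle_trans ratio_le _.
have q_m : INR (m - 2).+1 + 2 = INR m.+1 by rewrite -(plus_INR _ 2); congr INR; lia.
have q_ge1 : 1 <= INR (m - 2).+1 by apply: (le_INR 1); apply/leP.
have -> : 9 / INR (m - 2).+1 = 27 / (3 * INR (m - 2).+1) by field; lra.
by apply: Rmult_le_compat_l; [lra | apply: Rinv_le_contravar; lra].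
Qed.

End RatioBound.

Theorem lemma9 :
  exists C : R, (0 < C)%R /\
    forall (n : nat), (1 <= n)%N ->
    forall J : mechanism n, is_mechanism J -> truthful J ->
    forall eps : R, (0 < eps)%R ->
      exists p : profile n, valid_profile p /\
        (ratio J p <= C / sqrt (INR n) + eps)%R.
Proof.
exists 27%R; split; first lra.
move=> n n_gt0 J J_mech J_truthful eps eps_gt0.
have [p [p_ok ratio_le]] := exists_profile_ratio_le_sqrt n_gt0 J_mech J_truthful.
by exists p; split => //; lra.
Qed.
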